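(* Let $D_1$ be an $m\times m$ spherical Euclidean distance matrix (EDM) generated by points that lie on a hypersphere of radius $\rho_1$, and let $D_2$ be an $n\times n$ spherical EDM generated by points that lie on a hypersphere of radius $\rho_2$. Then $D = E_m\otimes D_2 + D_1\otimes E_n$ is a spherical EDM generated by points that lie on a hypersphere of radius $\rho = (\rho_1^2+\rho_2^2)^{1/2}$. Here $E_k$ is the $k\times k$ all-ones matrix and $\otimes$ is the Kronecker product.
   Context: An $N\times N$ matrix $D=(d_{ij})$ is a Euclidean distance matrix (EDM) if there exist points $p^1,\dots,p^N$ in some Euclidean space with $d_{ij}=\|p^i-p^j\|^2$ for all $i,j$; the dimension of their affine span is the embedding dimension $r$ of $D$. An EDM is spherical if it is generated by points lying on a hypersphere. Convention: the generating points of an EDM of embedding dimension $r$ are taken in $\mathbb{R}^r$ (so they affinely span $\mathbb{R}^r$), and the hypersphere is a hypersphere in $\mathbb{R}^r$; its radius is then uniquely determined by the matrix. *)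

From HB Require Import structures.
From mathcomp Require Import all_boot all_order all_algebra.
From mathcomp Require Export mxtens.
Set Implicit Arguments. Unset Strict Implicit. Unset Printing Implicit Defensive.
Import Order.TTheory GRing.Theory Num.Theory.
Local Open Scope ring_scope.

Definition sqdist (R : numDomainType) (k : nat) (u v : 'rV[R]_k) : R :=
  \sum_(l < k) (u 0 l - v 0 l) ^+ 2.

Definition generates_EDM (R : numDomainType) (N k : nat)
  (D : 'M[R]_N) (p : 'I_N -> 'rV[R]_k) : Prop :=
  forall i j, D i j = sqdist (p i) (p j).

(* The points p^1..p^N affinely span R^k: the linear span of all the
   differences p^i - p^j (the direction space of the affine hull) is
   k-dimensional. *)
Definition affinely_spans (R : fieldType) (N k : nat) (p : 'I_N -> 'rV[R]_k) : Prop :=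
  \rank (\sum_(i < N) \sum_(j < N) <<p i - p j>>)%MS = k.

Definition is_EDM (R : numFieldType) (N : nat) (D : 'M[R]_N) : Prop :=
  exists (k : nat) (p : 'I_N -> 'rV[R]_k), generates_EDM D p.

(* Following the stated convention, the generating points are taken in
   R^r, r = embedding dimension (so they affinely span R^r), and the
   hypersphere (center c, radius rho >= 0) lies in R^r. *)
Definition spherical_EDM_radius (R : numFieldType) (N : nat) (D : 'M[R]_N)
  (rho : R) : Prop :=
  0 <= rho /\
  exists (r : nat) (p : 'I_N -> 'rV[R]_r) (c : 'rV[R]_r),
    [/\ generates_EDM D p, affinely_spans p &
        forall i, sqdist (p i) c = rho ^+ 2].

Definition Eones (R : pzRingType) (k : nat) : 'M[R]_k := const_mx 1.

From HB Require Import structures.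
From mathcomp Require Import all_boot all_order all_algebra.
From mathcomp Require Import mxtens.
Set Implicit Arguments. Unset Strict Implicit. Unset Printing Implicit Defensive.
Import Order.TTheory GRing.Theory Num.Theory.
Local Open Scope ring_scope.

(* Generate D = E_m (x) D2 + D1 (x) E_n by the concatenated points
   (p1 i, p2 j) in R^(r1 + r2): squared distances add, and so do the squared
   distances to the concatenated centre (c1, c2).  The direction space of the
   new points contains every p1 i - p1 k (placed in the first r1 coordinates,
   with j fixed) and every p2 j - p2 l (in the last r2 coordinates, with i
   fixed), hence is all of R^(r1 + r2). *)

Lemma sqdist_row_mx (R : numDomainType) a b (u1 v1 : 'rV[R]_a) (u2 v2 : 'rV[R]_b) :
  sqdist (row_mx u1 u2) (row_mx v1 v2) = sqdist u1 v1 + sqdist u2 v2.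
Proof.
rewrite /sqdist big_split_ord /=; congr (_ + _); apply: eq_bigr => l _;
  by rewrite ?row_mxEl ?row_mxEr.
Qed.

Section DirectionSpace.

Variable F : fieldType.

Definition diffspace N k (p : 'I_N -> 'rV[F]_k) : 'M[F]_k :=
  (\sum_(i < N) \sum_(j < N) <<p i - p j>>)%MS.

Lemma affinely_spansE N k (p : 'I_N -> 'rV[F]_k) :
  affinely_spans p <-> (1%:M <= diffspace p)%MS.
Proof. by rewrite sub1mx; split=> [/eqP | /eqP]. Qed.

Lemma diff_sub_diffspace N k (p : 'I_N -> 'rV[F]_k) i j :
  (p i - p j <= diffspace p)%MS.
Proof.
apply: submx_trans (sumsmx_sup i _ _) => //.
by apply: submx_trans (sumsmx_sup j _ _); rewrite ?genmxE.
Qed.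

Lemma sumsmx_mulmx_sub (I : finType) n k l (A : I -> 'M[F]_n)
    (L : 'M_(n, k)) (S : 'M_(l, k)) :
  (forall i, (A i *m L <= S)%MS) -> ((\sum_i A i)%MS *m L <= S)%MS.
Proof.
move=> AL_S; apply: (big_ind (fun X : 'M_n => (X *m L <= S)%MS)) => //.
- by rewrite mul0mx sub0mx.
- by move=> X Y XL_S YL_S; rewrite addsmxMr addsmx_sub XL_S.
Qed.

Lemma diffspace_mulmx_sub N M k l (p : 'I_N -> 'rV[F]_k) (q : 'I_M -> 'rV[F]_l)
    (f : 'I_N -> 'I_M) (L : 'M_(k, l)) :
  (forall i j, (p i - p j) *m L = q (f i) - q (f j)) ->
  (diffspace p *m L <= diffspace q)%MS.
Proof.
move=> pLq; do 2![apply: sumsmx_mulmx_sub => ?].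
by rewrite (eqmxMr L (genmxE _)) pLq diff_sub_diffspace.
Qed.

Lemma affinely_spans_mulmx_sub N M k l (p : 'I_N -> 'rV[F]_k)
    (q : 'I_M -> 'rV[F]_l) (f : 'I_N -> 'I_M) (L : 'M_(k, l)) :
  affinely_spans p ->
  (forall i j, (p i - p j) *m L = q (f i) - q (f j)) ->
  (L <= diffspace q)%MS.
Proof.
move=> /affinely_spansE p_full /diffspace_mulmx_sub pLq.
by rewrite -[L]mul1mx (submx_trans (submxMr L p_full) pLq).
Qed.

End DirectionSpace.

Section ProductPoints.

Variables (R : numFieldType) (m n r1 r2 : nat).
Variables (p1 : 'I_m -> 'rV[R]_r1) (p2 : 'I_n -> 'rV[R]_r2).

Definition prod_points (k : 'I_(m * n)) : 'rV[R]_(r1 + r2) :=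
  row_mx (p1 (mxtens_unindex k).1) (p2 (mxtens_unindex k).2).

Lemma generates_EDM_prod_points (D1 : 'M[R]_m) (D2 : 'M[R]_n) :
  generates_EDM D1 p1 -> generates_EDM D2 p2 ->
  generates_EDM (tensmx (Eones R m) D2 + tensmx D1 (Eones R n)) prod_points.
Proof.
move=> gen1 gen2 i j.
by rewrite sqdist_row_mx -gen1 -gen2 !mxE mul1r mulr1 addrC.
Qed.

Lemma sqdist_prod_points (c1 : 'rV_r1) (c2 : 'rV_r2) (rho1 rho2 : R) k :
  (forall i, sqdist (p1 i) c1 = rho1 ^+ 2) ->
  (forall j, sqdist (p2 j) c2 = rho2 ^+ 2) ->
  sqdist (prod_points k) (row_mx c1 c2) = rho1 ^+ 2 + rho2 ^+ 2.
Proof. by move=> sph1 sph2; rewrite sqdist_row_mx sph1 sph2. Qed.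

Lemma prod_points_sub (i k : 'I_m) (j l : 'I_n) :
  prod_points (mxtens_index (i, j)) - prod_points (mxtens_index (k, l)) =
  row_mx (p1 i - p1 k) (p2 j - p2 l).
Proof. by rewrite /prod_points !mxtens_indexK opp_row_mx add_row_mx. Qed.

Lemma affinely_spans_prod_points :
  (0 < m)%N -> (0 < n)%N -> affinely_spans p1 -> affinely_spans p2 ->
  affinely_spans prod_points.
Proof.
move=> m_gt0 n_gt0 span1 span2; apply/affinely_spansE.
pose i0 : 'I_m := Ordinal m_gt0; pose j0 : 'I_n := Ordinal n_gt0.
have left_sub : (row_mx 1%:M 0 <= diffspace prod_points)%MS.
  apply: (affinely_spans_mulmx_sub (f := fun i => mxtens_index (i, j0)) span1).
  by move=> i k; rewrite prod_points_sub subrr mul_mx_row mulmx1 mulmx0.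
have right_sub : (row_mx 0 1%:M <= diffspace prod_points)%MS.
  apply: (affinely_spans_mulmx_sub (f := fun j => mxtens_index (i0, j)) span2).
  by move=> j l; rewrite prod_points_sub subrr mul_mx_row mulmx1 mulmx0.
(* block_mx A B C D is by definition col_mx (row_mx A B) (row_mx C D). *)
by rewrite scalar_mx_block -[block_mx _ _ _ _]/(col_mx _ _) col_mx_sub left_sub.
Qed.

End ProductPoints.

Lemma spherical_EDM_radius_size0 (R : numFieldType) N (D : 'M[R]_N) (rho : R) :
  N = 0%N -> 0 <= rho -> spherical_EDM_radius D rho.
Proof.
move=> N0 rho_ge0; split=> //; exists 0%N, (fun=> 0), 0.
have no_index (i : 'I_N) : False by move: (ltn_ord i); rewrite {2}N0.
split; [by move=> i; case: (no_index i) | | by move=> i; case: (no_index i)].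
by apply/eqP; rewrite eqn_leq rank_leq_col.
Qed.

Theorem theorem5 (R : rcfType) (m n : nat) (D1 : 'M[R]_m) (D2 : 'M[R]_n)
    (rho1 rho2 : R) :
  spherical_EDM_radius D1 rho1 ->
  spherical_EDM_radius D2 rho2 ->
  spherical_EDM_radius (tensmx (Eones R m) D2 + tensmx D1 (Eones R n))
    (Num.sqrt (rho1 ^+ 2 + rho2 ^+ 2)).
Proof.
move=> [_ [r1 [p1 [c1 [gen1 span1 sph1]]]]] [_ [r2 [p2 [c2 [gen2 span2 sph2]]]]].
have [mn0 | ] := posnP (m * n).
  exact: spherical_EDM_radius_size0 mn0 (sqrtr_ge0 _).
rewrite muln_gt0 => /andP [m_gt0 n_gt0].
split; first exact: sqrtr_ge0.
exists (r1 + r2)%N, (prod_points p1 p2), (row_mx c1 c2); split.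
- exact: generates_EDM_prod_points.
- exact: affinely_spans_prod_points.
- by move=> k; rewrite (sqdist_prod_points k sph1 sph2) sqr_sqrtr ?addr_ge0 ?sqr_ge0.
Qed.
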